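(* Suppose $\|\mathbf{T} - \mathbf{T}_0\|_\infty \leq \frac{\pi_{\min}}{\gamma_1}$. Then \begin{gather*} \max_i |\boldsymbol{\pi}(i) - \boldsymbol{\pi}_0(i)| \leq \frac{\pi_{\min}}{2}, \quad \min_i \boldsymbol{\pi}_0(i) \geq \frac{\pi_{\min}}{2}, \quad \max_i \boldsymbol{\pi}_0(i) \leq \pi_{\max} + \frac{\pi_{\min}}{2},\\ \max_i |\boldsymbol{\pi}(i)^{-\frac{1}{2}} - \boldsymbol{\pi}_0(i)^{-\frac{1}{2}}| \leq (\sqrt{2}-1) \gamma_1 \pi_{\min}^{-\frac{3}{2}} \|\mathbf{T} - \mathbf{T}_0\|_\infty,\\ \max_i |\boldsymbol{\pi}(i)^{\frac{1}{2}} - \boldsymbol{\pi}_0(i)^{\frac{1}{2}}| \leq (1-\tfrac{\sqrt{2}}{2}) \gamma_1 \pi_{\min}^{-\frac{1}{2}} \|\mathbf{T} - \mathbf{T}_0\|_\infty. \end{gather*}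
   Context: Let $\mathbf{T},\mathbf{T}_0\in\mathbb{R}^{s\times s}$ be Markov matrices with stationary distributions $\boldsymbol{\pi},\boldsymbol{\pi}_0\in\mathbb{R}^{s}$. Let $\gamma_1:=\sum_{i=2}^s\frac{1}{1-\lambda_i(\mathbf{T})}$, where $\lambda_i$ is the $i$-th largest eigenvalue; it is known that $\|\boldsymbol{\pi}-\boldsymbol{\pi}_0\|_1\le\gamma_1\|\mathbf{T}-\mathbf{T}_0\|_\infty$. Let $\pi_{\min}:=\min_i\boldsymbol{\pi}(i)$ and $\pi_{\max}:=\max_i\boldsymbol{\pi}(i)$. *)

From HB Require Import structures.
From mathcomp Require Import all_boot all_order all_algebra.
Set Implicit Arguments. Unset Strict Implicit. Unset Printing Implicit Defensive.
Import Order.TTheory GRing.Theory Num.Theory.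
Local Open Scope ring_scope.

Section Defs.
Variables (R : rcfType) (s : nat).

Definition markov (T : 'M[R]_s) : Prop :=
  (forall i j, 0 <= T i j) /\ (forall i, \sum_(j < s) T i j = 1).

Definition stationary (T : 'M[R]_s) (p : 'rV[R]_s) : Prop :=
  (forall i, 0 <= p 0 i) /\ \sum_(i < s) p 0 i = 1 /\ p *m T = p.

Definition mxnorm_inf (A : 'M[R]_s) : R :=
  \big[Num.max/0]_(i < s) \sum_(j < s) `|A i j|.

Definition vnorm1 (v : 'rV[R]_s) : R := \sum_(i < s) `|v 0 i|.

(* Minimum / maximum entry of a probability vector (s > 0). Defaults 1 and 0
   are harmless: entries of a probability vector lie in [0,1]. *)
Definition pmin (p : 'rV[R]_s) : R := \big[Num.min/1]_(i < s) p 0 i.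
Definition pmax (p : 'rV[R]_s) : R := \big[Num.max/0]_(i < s) p 0 i.

Definition sorted_spectrum (T : 'M[R]_s) (lam : 'I_s -> R) : Prop :=
  char_poly T = \prod_(i < s) ('X - (lam i)%:P) /\
  (forall i j : 'I_s, (i <= j)%N -> lam j <= lam i).

(* gamma_1 = sum_{i>=2} 1/(1 - lambda_i)  (0-based: indices i >= 1). *)
Definition gamma1 (lam : 'I_s -> R) : R :=
  \sum_(i < s | (0 < i)%N) (1 - lam i)^-1.

End Defs.

From HB Require Import structures.
From mathcomp Require Import all_boot all_order all_algebra.
From mathcomp Require Import ring lra.
Set Implicit Arguments. Unset Strict Implicit. Unset Printing Implicit Defensive.
Import Order.TTheory GRing.Theory Num.Theory.
Local Open Scope ring_scope.

(* Both distributions sum to one, so each entry of pi - pi0 is at most half of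
   the l1 error, hence at most gamma1 ||T - T0||_inf / 2 <= pmin / 2; every pi0(i)
   is then within pmin / 2 of pi(i) >= pmin.  For the square roots,
   |sqrt a - sqrt b| = |a - b| / (sqrt a + sqrt b) with
   sqrt a + sqrt b >= (1 + 1/sqrt 2) sqrt pmin, and
   |1/sqrt a - 1/sqrt b| = |sqrt a - sqrt b| / sqrt (a b) with sqrt (a b) >= pmin / sqrt 2.
   The spectral hypotheses enter only through the assumed l1 bound and gamma1 >= 0. *)

Lemma sqrt2_gt1 (R : rcfType) : 1 < Num.sqrt 2 :> R.
Proof. by rewrite -[X in X < _]sqrtr1 ltr_sqrt //; lra. Qed.

Lemma sqr_sqrt2 (R : rcfType) : Num.sqrt 2 ^+ 2 = 2 :> R.
Proof. by rewrite sqr_sqrtr. Qed.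

Lemma sqrtr_lower_bounds (R : rcfType) (a b m : R) : 0 <= m -> m <= a -> m <= 2 * b ->
  Num.sqrt m <= Num.sqrt a /\ Num.sqrt m <= Num.sqrt 2 * Num.sqrt b.
Proof. by move=> m_ge0 m_le_a m_le_2b; rewrite -sqrtrM ?ler_sqrt //; lra. Qed.

Lemma sqrtr_add_ge (R : rcfType) (a b m : R) : 0 <= m -> m <= a -> m <= 2 * b ->
  Num.sqrt m * (Num.sqrt 2 + 1) <= Num.sqrt 2 * (Num.sqrt a + Num.sqrt b).
Proof.
move=> m_ge0 m_le_a m_le_2b.
have [le_a le_b] := sqrtr_lower_bounds m_ge0 m_le_a m_le_2b.
have := sqrtr_ge0 a; have := sqrt2_gt1 R; nra.
Qed.

Lemma dist_sqrtr_mul_le (R : rcfType) (a b m : R) : 0 <= m -> m <= a -> m <= 2 * b ->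
  `|Num.sqrt a - Num.sqrt b| * Num.sqrt m <= (2 - Num.sqrt 2) * `|a - b|.
Proof.
move=> m_ge0 m_le_a m_le_2b.
have a_ge0 : 0 <= a by lra.
have b_ge0 : 0 <= b by lra.
have sum_ge := sqrtr_add_ge m_ge0 m_le_a m_le_2b.
set x := Num.sqrt a in sum_ge *; set y := Num.sqrt b in sum_ge *.
set q := Num.sqrt m in sum_ge *; set r := Num.sqrt 2 in sum_ge *.
have r2 : r ^+ 2 = 2 := sqr_sqrt2 R.
have r1 : 1 < r := sqrt2_gt1 R.
have xy_ge0 : 0 <= x + y by rewrite addr_ge0 ?sqrtr_ge0.
set e := `|x - y|.
have ab : `|a - b| = e * (x + y).
  by rewrite -(ger0_norm xy_ge0) -normrM -subr_sqr !sqr_sqrtr.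
have scaled : q * (r + 1) * (e * (r - 1)) <= r * (x + y) * (e * (r - 1)).
  by rewrite ler_wpM2r // mulr_ge0 ?normr_ge0 // subr_ge0 ltW.
have lhsE : q * (r + 1) * (e * (r - 1)) = e * q * (r ^+ 2 - 1) by ring.
have rhsE : r * (x + y) * (e * (r - 1)) = e * (x + y) * (r ^+ 2 - r) by ring.
by rewrite lhsE rhsE r2 in scaled; rewrite ab; lra.
Qed.

Lemma dist_invsqrtr_mul_le (R : rcfType) (a b m : R) : 0 < m -> m <= a -> m <= 2 * b ->
  `|(Num.sqrt a)^-1 - (Num.sqrt b)^-1| * (m * Num.sqrt m)
    <= 2 * (Num.sqrt 2 - 1) * `|a - b|.
Proof.
move=> m_gt0 m_le_a m_le_2b.
have dist_le := dist_sqrtr_mul_le (ltW m_gt0) m_le_a m_le_2b.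
have [le_a le_b] := sqrtr_lower_bounds (ltW m_gt0) m_le_a m_le_2b.
have q_gt0 : 0 < Num.sqrt m by rewrite sqrtr_gt0.
have r1 := sqrt2_gt1 R; have r2 := sqr_sqrt2 R.
set x := Num.sqrt a in dist_le le_a *; set y := Num.sqrt b in dist_le le_b *.
set q := Num.sqrt m in dist_le le_a le_b q_gt0 *; set r := Num.sqrt 2 in dist_le le_b r1 r2 *.
have x_gt0 : 0 < x by lra.
have y_gt0 : 0 < y by nra.
have xy_gt0 : 0 < x * y by rewrite mulr_gt0.
have m_le_rxy : m / (x * y) <= r.
  have mE : m = q * q by rewrite -expr2 sqr_sqrtr // ltW.
  have : q * q <= x * (r * y) by rewrite ler_pM // ltW.
  by rewrite ler_pdivrMr // mE; lra.
have invE : `|x^-1 - y^-1| * (m * q) = `|x - y| * q * (m / (x * y)).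
  have -> : x^-1 - y^-1 = (y - x) / (x * y) by field; rewrite !gt_eqF.
  by rewrite normrM normfV distrC (gtr0_norm xy_gt0); ring.
rewrite invE.
have := ler_pM (mulr_ge0 (normr_ge0 _) (ltW q_gt0))
  (divr_ge0 (ltW m_gt0) (ltW xy_gt0)) dist_le m_le_rxy.
have -> : (2 - r) * `|a - b| * r = 2 * (r - 1) * `|a - b| + (2 - r ^+ 2) * `|a - b| by ring.
by rewrite r2 subrr mul0r addr0.
Qed.

Lemma twice_ge_of_dist_le (R : realFieldType) (a b m D : R) :
  m <= a -> `|a - b| <= D / 2 -> D <= m -> m <= 2 * b.
Proof. move=> m_le_a; rewrite ler_distl => /andP[_]; lra. Qed.

Lemma eq_of_dist_le_nonpos (R : realFieldType) (a b m D : R) :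
  m <= 0 -> `|a - b| <= D / 2 -> D <= m -> D = 0 /\ a = b.
Proof.
move=> m_le0 dist_le D_le_m; have := normr_ge0 (a - b).
by split; [|apply/eqP; rewrite -subr_eq0 -normr_le0]; lra.
Qed.

Lemma sqrtr_perturbation (R : rcfType) (a b m D : R) :
  0 <= m -> m <= a -> `|a - b| <= D / 2 -> D <= m ->
  `|Num.sqrt a - Num.sqrt b| <= (1 - Num.sqrt 2 / 2) * D / Num.sqrt m.
Proof.
move=> m_ge0 m_le_a dist_le D_le_m.
have [m_gt0|m_le0] := ltrP 0 m; last first.
  have [-> ->] := eq_of_dist_le_nonpos m_le0 dist_le D_le_m.
  by rewrite subrr normr0 mulr0 mul0r.
have m_le_2b := twice_ge_of_dist_le m_le_a dist_le D_le_m.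
rewrite ler_pdivlMr ?sqrtr_gt0 //.
apply: le_trans (dist_sqrtr_mul_le m_ge0 m_le_a m_le_2b) _.
have := sqrt2_gt1 R; have := sqr_sqrt2 R; nra.
Qed.

Lemma invsqrtr_perturbation (R : rcfType) (a b m D : R) :
  0 <= m -> m <= a -> `|a - b| <= D / 2 -> D <= m ->
  `|(Num.sqrt a)^-1 - (Num.sqrt b)^-1| <= (Num.sqrt 2 - 1) * D / (m * Num.sqrt m).
Proof.
move=> m_ge0 m_le_a dist_le D_le_m.
have [m_gt0|m_le0] := ltrP 0 m; last first.
  have [-> ->] := eq_of_dist_le_nonpos m_le0 dist_le D_le_m.
  by rewrite subrr normr0 mulr0 mul0r.
have m_le_2b := twice_ge_of_dist_le m_le_a dist_le D_le_m.
rewrite ler_pdivlMr ?mulr_gt0 ?sqrtr_gt0 //.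
apply: le_trans (dist_invsqrtr_mul_le m_gt0 m_le_a m_le_2b) _.
have := sqrt2_gt1 R; nra.
Qed.

Lemma norm_le_half_sum_norm (R : numDomainType) (I : finType) (F : I -> R) (i : I) :
  \sum_j F j = 0 -> 2 * `|F i| <= \sum_j `|F j|.
Proof.
move=> sum0; rewrite (bigD1 i) //= mulr_natl mulr2n lerD2l.
have -> : F i = - \sum_(j | j != i) F j.
  by apply/eqP; rewrite -addr_eq0 -[X in _ == X]sum0 [X in _ == X](bigD1 i).
by rewrite normrN ler_norm_sum.
Qed.

Lemma dist_entry_le_half_vnorm1 (R : rcfType) (s : nat) (p q : 'rV[R]_s) (i : 'I_s) :
  \sum_j p 0 j = \sum_j q 0 j -> `|p 0 i - q 0 i| <= vnorm1 (p - q) / 2.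
Proof.
move=> sum_eq; rewrite ler_pdivlMr // mulrC.
have -> : vnorm1 (p - q) = \sum_j `|p 0 j - q 0 j| by apply: eq_bigr => j _; rewrite !mxE.
by apply: norm_le_half_sum_norm; rewrite sumrB sum_eq subrr.
Qed.

Lemma pmin_le (R : rcfType) (s : nat) (p : 'rV[R]_s) (i : 'I_s) : pmin p <= p 0 i.
Proof. by rewrite /pmin (bigD1 i) //= ge_min lexx. Qed.

Lemma pmin_ge0 (R : rcfType) (s : nat) (p : 'rV[R]_s) :
  (forall i, 0 <= p 0 i) -> 0 <= pmin p.
Proof. by move=> p_ge0; rewrite /pmin; elim/big_ind: _ => // x y; rewrite le_min => -> ->. Qed.

Lemma pmax_ge (R : rcfType) (s : nat) (p : 'rV[R]_s) (i : 'I_s) : p 0 i <= pmax p.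
Proof. by rewrite /pmax (bigD1 i) //= le_max lexx. Qed.

Lemma gamma1_ge0 (R : rcfType) (s : nat) (lam : 'I_s -> R) :
  (forall i : 'I_s, (0 < i)%N -> lam i < 1) -> 0 <= gamma1 lam.
Proof. by move=> lam_lt1; apply: sumr_ge0 => i /lam_lt1 /ltW; rewrite invr_ge0 subr_ge0. Qed.

Lemma mulr_le_of_le_divr (R : realFieldType) (g x m : R) :
  0 <= g -> 0 <= m -> x <= m / g -> g * x <= m.
Proof.
rewrite le_eqVlt => /predU1P[<- | g_gt0] m_ge0 le_div; first by rewrite mul0r.
by rewrite mulrC -ler_pdivlMr.
Qed.

Theorem corollary1 (R : rcfType) (s : nat) (T T0 : 'M[R]_s)
    (pi pi0 : 'rV[R]_s) (lam : 'I_s -> R) :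
  (0 < s)%N ->
  markov T -> markov T0 ->
  stationary T pi -> stationary T0 pi0 ->
  sorted_spectrum T lam ->
  (forall i : 'I_s, (0 < i)%N -> lam i < 1) ->
  (* the known perturbation bound ||pi - pi0||_1 <= gamma_1 ||T - T0||_inf *)
  vnorm1 (pi - pi0) <= gamma1 lam * mxnorm_inf (T - T0) ->
  mxnorm_inf (T - T0) <= pmin pi / gamma1 lam ->
  (forall i, `|pi 0 i - pi0 0 i| <= pmin pi / 2) /\
  (forall i, pmin pi / 2 <= pi0 0 i) /\
  (forall i, pi0 0 i <= pmax pi + pmin pi / 2) /\
  (forall i, `|(Num.sqrt (pi 0 i))^-1 - (Num.sqrt (pi0 0 i))^-1|
              <= (Num.sqrt 2 - 1) * gamma1 lam
                 * (pmin pi * Num.sqrt (pmin pi))^-1 * mxnorm_inf (T - T0)) /\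
  (forall i, `|Num.sqrt (pi 0 i) - Num.sqrt (pi0 0 i)|
              <= (1 - Num.sqrt 2 / 2) * gamma1 lam
                 * (Num.sqrt (pmin pi))^-1 * mxnorm_inf (T - T0)).
Proof.
move=> _ _ _ [pi_ge0 [pi_sum _]] [_ [pi0_sum _]] _ lam_lt1 l1_le norm_le.
set m := pmin pi in norm_le *; set N := mxnorm_inf (T - T0) in l1_le norm_le *.
set g := gamma1 lam in l1_le norm_le *.
have m_ge0 : 0 <= m := pmin_ge0 pi_ge0.
have D_le_m : g * N <= m := mulr_le_of_le_divr (gamma1_ge0 lam_lt1) m_ge0 norm_le.
have dist_le i : `|pi 0 i - pi0 0 i| <= g * N / 2.
  have := dist_entry_le_half_vnorm1 i (etrans pi_sum (esym pi0_sum)); lra.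
have dist_le_m i : `|pi 0 i - pi0 0 i| <= m / 2 by have := dist_le i; lra.
split; [exact: dist_le_m | split; [|split; [|split]]] => i.
- by have := pmin_le pi i; have := ler_distlBl (dist_le_m i); rewrite -/m; lra.
- by have := pmax_ge pi i; have := ler_distlCDr (dist_le_m i); lra.
- rewrite [X in _ <= X](_ : _ = (Num.sqrt 2 - 1) * (g * N) / (m * Num.sqrt m)); last by ring.
  exact: invsqrtr_perturbation (pmin_le pi i) (dist_le i) D_le_m.
- rewrite [X in _ <= X](_ : _ = (1 - Num.sqrt 2 / 2) * (g * N) / Num.sqrt m); last by ring.
  exact: sqrtr_perturbation (pmin_le pi i) (dist_le i) D_le_m.
Qed.
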